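(* Let $Y=\left(\sum_{n=1}^\infty\ell_\infty^n\right)_{\ell_2}$. Then every finite subset $F$ of $T^\omega_\omega$ satisfies $c_Y(F)=1$ (in particular $T^\omega_\omega$ is crudely finitely representable in $Y$), but $T^\omega_\omega$ admits no bi-Lipschitz embedding into $Y$.
   Context: $\left(\sum_{n=1}^\infty\ell_\infty^n\right)_{\ell_2}$ is the Banach space of sequences $(x_n)_{n\ge1}$ with $x_n\in\ell_\infty^n$ (the space $\mathbb R^n$ with the max norm) and $\|(x_n)\|=(\sum_n\|x_n\|_\infty^2)^{1/2}<\infty$. $T^\omega_\omega$ is the rooted tree in which every vertex has countably infinitely many children, with the unweighted shortest-path metric. A metric space $X$ is $\lambda$-finitely representable in $Y$ if $c_Y(F)\le\lambda$ for every finite $F\subset X$, and crudely finitely representable if this holds for some $\lambda\in[1,\infty)$; here $c_Y(M):=\inf\{\mathrm{Lip}(f)\mathrm{Lip}(f^{-1}): f\colon M\to Y\text{ injective}\}$. *)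

From Stdlib Require Import Reals Lra List ClassicalEpsilon.
Import ListNotations.
Open Scope R_scope.

(* A vertex is the finite sequence of child-indices along the path from the
   root (root = []); the children of s are s ++ [n], n : nat. *)
Definition vertex := list nat.

Fixpoint common_prefix_len (s t : vertex) : nat :=
  match s, t with
  | a :: s', b :: t' => if Nat.eqb a b then S (common_prefix_len s' t') else O
  | _, _ => O
  end.

Definition dT (s t : vertex) : R :=
  INR (length s + length t - 2 * common_prefix_len s t)%nat.

(* An element is x : nat -> nat -> R; block x n (n = 0,1,2,...) is the vector
   (x n 0, ..., x n n) of l_inf^(n+1), i.e. block index n corresponds to the
   space l_inf^(n+1) of the paper. *)
Definition seqY := nat -> nat -> R.

Fixpoint maxabs (v : nat -> R) (m : nat) : R :=
  match m with
  | O => Rabs (v O)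
  | S m' => Rmax (maxabs v m') (Rabs (v m))
  end.

Definition blocknorm (x : seqY) (n : nat) : R := maxabs (x n) n.

Definition inY (x : seqY) : Prop :=
  (forall n k, (n < k)%nat -> x n k = 0) /\
  exists l, infinite_sum (fun n => (blocknorm x n) ^ 2) l.

Definition subY (x y : seqY) : seqY := fun n k => x n k - y n k.

(* ||x||_Y = (sum_n ||x_n||_inf^2)^(1/2) (meaningful for x in Y) *)
Definition normY (x : seqY) : R :=
  sqrt (epsilon (inhabits 0)
          (fun l => infinite_sum (fun n => (blocknorm x n) ^ 2) l)).

Definition dY (x y : seqY) : R := normY (subY x y).

Definition is_glb (E : R -> Prop) (m : R) : Prop :=
  (forall x, E x -> m <= x) /\ (forall b, (forall x, E x -> b <= x) -> b <= m).

Definition lub_of (E : R -> Prop) : R := epsilon (inhabits 0) (is_lub E).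

Definition InjOn (F : list vertex) (f : vertex -> seqY) : Prop :=
  forall s t, In s F -> In t F -> f s = f t -> s = t.

Definition LipF (F : list vertex) (f : vertex -> seqY) : R :=
  lub_of (fun r => exists s t, In s F /\ In t F /\ s <> t /\
                               r = dY (f s) (f t) / dT s t).

Definition LipInvF (F : list vertex) (f : vertex -> seqY) : R :=
  lub_of (fun r => exists s t, In s F /\ In t F /\ s <> t /\
                               r = dT s t / dY (f s) (f t)).

Definition distortions (F : list vertex) : R -> Prop :=
  fun c => exists f : vertex -> seqY,
      (forall s, In s F -> inY (f s)) /\ InjOn F f /\
      c = LipF F f * LipInvF F f.

Definition cY_is (F : list vertex) (c : R) : Prop := is_glb (distortions F) c.

Definition biLip_embeds_tree_in_Y : Prop :=
  exists (f : vertex -> seqY) (A B : R), 0 < A /\ 0 < B /\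
    (forall s, inY (f s)) /\
    forall s t, A * dT s t <= dY (f s) (f t) <= B * dT s t.

From Stdlib Require Import Reals Lra Lia List ClassicalEpsilon Classical FunctionalExtensionality.
Import ListNotations.
Open Scope R_scope.

(* A finite subset F of the tree embeds isometrically into the single block l_inf^|F| of Y by
   the Frechet embedding s |-> (d(s, u))_{u in F}, so c_Y(F) = 1.

   Suppose now A d(s, t) <= d_Y(f s, f t) <= B d(s, t) on the whole tree. The first N blocks of Y
   span a finite-dimensional space, and the children of a vertex are pairwise at distance 2, so
   for every vertex and every N some child moves by a vector whose first N blocks have squared
   norm at most B^2 - 7A^2/8. Following such children greedily, each time choosing N beyond the
   point where the displacement accumulated so far has tail below 1, the heads add up linearly
   with rate beta = sqrt(B^2 - 7A^2/8) while the tails add up in l_2 fashion: a greedy path of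
   length k moves by at most k beta + (B + 1) sqrt k. Replacing every edge of the tree by such a
   path of length m and dividing by m gives a new embedding with the same lower constant A and
   upper constant beta + (B + 1)/sqrt m, whose square is at most B^2 - A^2/2 for m large.
   Iterating lowers B^2 below 0. *)

(** * Finite and infinite sums *)

Fixpoint psum (g : nat -> R) (K : nat) : R :=
  match K with O => 0 | S K' => psum g K' + g K' end.

Lemma psum_ext g h K : (forall b, (b < K)%nat -> g b = h b) -> psum g K = psum h K.
Proof.
  induction K as [|K IH]; intros H; simpl; [reflexivity|].
  rewrite IH by (intros; apply H; lia). rewrite H by lia; reflexivity.
Qed.

Lemma psum_zero K : psum (fun _ => 0) K = 0.
Proof. induction K; simpl; lra. Qed.

Lemma psum_le g h K : (forall b, (b < K)%nat -> g b <= h b) -> psum g K <= psum h K.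
Proof.
  induction K as [|K IH]; intros H; simpl; [lra|].
  assert (psum g K <= psum h K) by (apply IH; intros; apply H; lia).
  assert (g K <= h K) by (apply H; lia). lra.
Qed.

Lemma psum_nonneg g K : (forall b, 0 <= g b) -> 0 <= psum g K.
Proof. intros H; induction K; simpl; [lra|]. specialize (H K); lra. Qed.

Lemma psum_mono g K K' : (forall b, 0 <= g b) -> (K <= K')%nat -> psum g K <= psum g K'.
Proof. intros H Hk; induction Hk; simpl; [lra|]. specialize (H m); lra. Qed.

Lemma sum_f_R0_psum g n : sum_f_R0 g n = psum g (S n).
Proof. induction n as [|n IH]; simpl in *; [lra|]. rewrite IH; reflexivity. Qed.

Lemma psum_le_const g K c : (forall b, (b < K)%nat -> g b <= c) -> psum g K <= INR K * c.
Proof.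
  induction K as [|K IH]; intros H; cbn [psum]; [simpl; lra|].
  assert (psum g K <= INR K * c) by (apply IH; intros; apply H; lia).
  assert (g K <= c) by (apply H; lia). rewrite S_INR; lra.
Qed.

Lemma psum_scal c g K : psum (fun b => c * g b) K = c * psum g K.
Proof. induction K as [|K IH]; simpl; [ring|]. rewrite IH; ring. Qed.

Lemma psum_single g j K :
  (forall b, b <> j -> g b = 0) -> 0 <= g j -> psum g K <= g j.
Proof.
  intros H Hj.
  assert (Hpre : forall K, (K <= j)%nat -> psum g K = 0).
  { induction K0; cbn [psum]; intros; [reflexivity|]. rewrite IHK0, H by lia. ring. }
  induction K as [|K IH]; cbn [psum]; [lra|].
  destruct (Nat.eq_dec K j) as [->|Hn].
  - rewrite Hpre by lia. lra.
  - rewrite H by exact Hn. lra.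
Qed.

Lemma psum_split_masked h N K : (N <= K)%nat ->
  psum h K = psum h N + psum (fun b => if (b <? N)%nat then 0 else h b) K.
Proof.
  intros HNK.
  assert (Hlow : forall K, (K <= N)%nat -> psum (fun b => if (b <? N)%nat then 0 else h b) K = 0).
  { induction K0; simpl; intros; [reflexivity|].
    rewrite IHK0 by lia. replace (K0 <? N)%nat with true by (symmetry; apply Nat.ltb_lt; lia). ring. }
  induction HNK as [|K HNK IH]; [rewrite Hlow by lia; ring|].
  simpl. rewrite IH. replace (K <? N)%nat with false by (symmetry; apply Nat.ltb_ge; lia). ring.
Qed.

Lemma sqrt_le_of_le_sq x y : 0 <= y -> x <= y ^ 2 -> sqrt x <= y.
Proof. intros Hy H. rewrite <- (sqrt_pow2 y Hy). apply sqrt_le_1_alt; exact H. Qed.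

Lemma le_sq_of_sqrt_le x y : 0 <= x -> sqrt x <= y -> x <= y ^ 2.
Proof.
  intros Hx H. assert (0 <= sqrt x) by apply sqrt_pos.
  pose proof (sqrt_sqrt x Hx). nra.
Qed.

Lemma sqrt_sq x : 0 <= x -> sqrt x ^ 2 = x.
Proof. intros Hx. rewrite <- Rsqr_pow2. apply Rsqr_sqrt, Hx. Qed.

Lemma cauchy_schwarz2 a c u v P Q : 0 <= P -> 0 <= Q ->
  P ^ 2 = a ^ 2 + u ^ 2 -> Q ^ 2 = c ^ 2 + v ^ 2 -> a * c + u * v <= P * Q.
Proof.
  intros HP HQ H1 H2.
  assert ((a * c + u * v) ^ 2 <= (P * Q) ^ 2).
  { replace ((P * Q) ^ 2) with (P ^ 2 * Q ^ 2) by ring. rewrite H1, H2.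
    assert (0 <= (a * v - u * c) ^ 2) by apply pow2_ge_0. nra. }
  assert (0 <= P * Q) by nra. nra.
Qed.

Lemma minkowski u v K :
  sqrt (psum (fun b => (u b + v b) ^ 2) K)
  <= sqrt (psum (fun b => u b ^ 2) K) + sqrt (psum (fun b => v b ^ 2) K).
Proof.
  induction K as [|K IH]; cbn [psum]; [rewrite sqrt_0; lra|].
  set (SW := psum (fun b => (u b + v b) ^ 2) K) in *.
  set (SU := psum (fun b => u b ^ 2) K) in *.
  set (SV := psum (fun b => v b ^ 2) K) in *.
  assert (HW : 0 <= SW) by (apply psum_nonneg; intros; apply pow2_ge_0).
  assert (HU : 0 <= SU) by (apply psum_nonneg; intros; apply pow2_ge_0).
  assert (HV : 0 <= SV) by (apply psum_nonneg; intros; apply pow2_ge_0).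
  set (a := sqrt SU) in *. set (c := sqrt SV) in *.
  assert (Ha : 0 <= a) by apply sqrt_pos. assert (Hc : 0 <= c) by apply sqrt_pos.
  assert (HSW : SW <= (a + c) ^ 2) by (apply le_sq_of_sqrt_le; auto).
  assert (Ea : a ^ 2 = SU) by (apply sqrt_sq; auto).
  assert (Ec : c ^ 2 = SV) by (apply sqrt_sq; auto).
  set (P := sqrt (SU + u K ^ 2)). set (Q := sqrt (SV + v K ^ 2)).
  assert (HP : 0 <= P) by apply sqrt_pos. assert (HQ : 0 <= Q) by apply sqrt_pos.
  assert (EP : P ^ 2 = a ^ 2 + u K ^ 2) by (unfold P; rewrite sqrt_sq; nra).
  assert (EQ : Q ^ 2 = c ^ 2 + v K ^ 2) by (unfold Q; rewrite sqrt_sq; nra).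
  pose proof (cauchy_schwarz2 a c (u K) (v K) P Q HP HQ EP EQ).
  apply sqrt_le_of_le_sq; [lra|]. nra.
Qed.

Lemma psum_sq_triangle w u v K :
  (forall b, 0 <= w b) -> (forall b, w b <= u b + v b) ->
  psum (fun b => w b ^ 2) K
  <= (sqrt (psum (fun b => u b ^ 2) K) + sqrt (psum (fun b => v b ^ 2) K)) ^ 2.
Proof.
  intros Hw H.
  apply Rle_trans with (psum (fun b => (u b + v b) ^ 2) K).
  - apply psum_le; intros b _. specialize (Hw b); specialize (H b). nra.
  - apply le_sq_of_sqrt_le; [apply psum_nonneg; intros; apply pow2_ge_0|apply minkowski].
Qed.

Lemma infinite_sum_ge_psum g l :
  infinite_sum g l -> (forall b, 0 <= g b) -> forall K, psum g K <= l.
Proof.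
  intros Hs Hg K. destruct (Rle_or_lt (psum g K) l) as [|Hlt]; auto.
  destruct (Hs (psum g K - l)) as [N HN]; [lra|].
  specialize (HN (N + K)%nat ltac:(lia)). rewrite sum_f_R0_psum in HN.
  assert (psum g K <= psum g (S (N + K))) by (apply psum_mono; auto; lia).
  unfold Rdist in HN. apply Rabs_def2 in HN. lra.
Qed.

Lemma infinite_sum_le g l X : infinite_sum g l -> (forall K, psum g K <= X) -> l <= X.
Proof.
  intros Hs H. destruct (Rle_or_lt l X) as [|Hlt]; auto.
  destruct (Hs (l - X)) as [N HN]; [lra|]. specialize (HN N ltac:(lia)).
  rewrite sum_f_R0_psum in HN. specialize (H (S N)). unfold Rdist in HN.
  apply Rabs_def2 in HN. lra.
Qed.

Lemma infinite_sum_of_bounded g M :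
  (forall b, 0 <= g b) -> (forall K, psum g K <= M) -> exists l, infinite_sum g l.
Proof.
  intros Hg H.
  assert (Hgr : Un_growing (sum_f_R0 g)).
  { intro n. rewrite !sum_f_R0_psum. cbn [psum]. specialize (Hg (S n)). cbn [psum] in *. lra. }
  assert (Hb : has_ub (sum_f_R0 g)).
  { exists M. intros y [n ->]. rewrite sum_f_R0_psum; apply H. }
  destruct (growing_cv _ Hgr Hb) as [l Hl]. exists l. exact Hl.
Qed.

(** * The space Y *)

Lemma maxabs_nonneg v m : 0 <= maxabs v m.
Proof.
  induction m; simpl; [apply Rabs_pos|].
  apply Rle_trans with (maxabs v m); [assumption|apply Rmax_l].
Qed.

Lemma maxabs_ge v m k : (k <= m)%nat -> Rabs (v k) <= maxabs v m.
Proof.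
  induction m as [|m IH]; intros Hk; simpl.
  - replace k with 0%nat by lia; lra.
  - destruct (Nat.eq_dec k (S m)) as [->|Hn]; [apply Rmax_r|].
    apply Rle_trans with (maxabs v m); [apply IH; lia|apply Rmax_l].
Qed.

Lemma maxabs_le v m c : (forall k, (k <= m)%nat -> Rabs (v k) <= c) -> maxabs v m <= c.
Proof.
  induction m as [|m IH]; intros H; simpl; [apply H; lia|].
  apply Rmax_lub; [apply IH; intros; apply H; lia|apply H; lia].
Qed.

Lemma maxabs_scal c v m : maxabs (fun k => c * v k) m = Rabs c * maxabs v m.
Proof.
  induction m as [|m IH]; simpl; [apply Rabs_mult|].
  rewrite IH, Rabs_mult. apply RmaxRmult, Rabs_pos.
Qed.

Lemma blocknorm_nonneg x b : 0 <= blocknorm x b.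
Proof. apply maxabs_nonneg. Qed.

Lemma blocknorm_zero x b : (forall k, (k <= b)%nat -> x b k = 0) -> blocknorm x b = 0.
Proof.
  intros H. apply Rle_antisym; [|apply blocknorm_nonneg].
  apply maxabs_le. intros k Hk. rewrite H, Rabs_R0 by exact Hk. lra.
Qed.

Lemma blocknorm_sub_self x b : blocknorm (subY x x) b = 0.
Proof. apply blocknorm_zero. intros; unfold subY; ring. Qed.

Lemma blocknorm_sub_triangle x y z b :
  blocknorm (subY x z) b <= blocknorm (subY x y) b + blocknorm (subY y z) b.
Proof.
  unfold blocknorm. apply maxabs_le; intros k Hk.
  pose proof (maxabs_ge (subY x y b) b k Hk).
  pose proof (maxabs_ge (subY y z b) b k Hk). unfold subY in *.
  replace (x b k - z b k) with ((x b k - y b k) + (y b k - z b k)) by ring.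
  pose proof (Rabs_triang (x b k - y b k) (y b k - z b k)). lra.
Qed.

Lemma blocknorm_sub_sym x y b : blocknorm (subY x y) b = blocknorm (subY y x) b.
Proof.
  unfold blocknorm, subY.
  apply Rle_antisym; apply maxabs_le; intros k Hk; rewrite Rabs_minus_sym;
    apply (maxabs_ge (fun k => _ - _) b k Hk).
Qed.

Lemma blocknorm_sub_le x y b : blocknorm (subY x y) b <= blocknorm x b + blocknorm y b.
Proof.
  unfold blocknorm. apply maxabs_le; intros k Hk.
  pose proof (maxabs_ge (x b) b k Hk). pose proof (maxabs_ge (y b) b k Hk).
  pose proof (Rabs_triang (x b k) (- y b k)). rewrite Rabs_Ropp in *. unfold subY, Rminus. lra.
Qed.

Definition head_sq (K : nat) (z : seqY) : R := psum (fun b => blocknorm z b ^ 2) K.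

Definition tail_sq (N K : nat) (z : seqY) : R :=
  psum (fun b => (if (b <? N)%nat then 0 else blocknorm z b) ^ 2) K.

Definition summable (z : seqY) : Prop :=
  exists l, infinite_sum (fun n => blocknorm z n ^ 2) l.

Lemma head_sq_nonneg K z : 0 <= head_sq K z.
Proof. apply psum_nonneg; intros; apply pow2_ge_0. Qed.

Lemma head_sq_mono K K' z : (K <= K')%nat -> head_sq K z <= head_sq K' z.
Proof. intros; apply psum_mono; auto; intros; apply pow2_ge_0. Qed.

Lemma head_sq_split N K z : (N <= K)%nat -> head_sq K z = head_sq N z + tail_sq N K z.
Proof.
  intros H. unfold head_sq, tail_sq. rewrite (psum_split_masked _ N K H). f_equal.
  apply psum_ext; intros b _. destruct (b <? N)%nat; ring.
Qed.

Lemma blocknorm_sq_le_head_sq z b : blocknorm z b ^ 2 <= head_sq (S b) z.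
Proof. unfold head_sq; cbn [psum]. pose proof (head_sq_nonneg b z). unfold head_sq in *. lra. Qed.

Lemma sq_triangle_bound P U V a b : 0 <= a -> 0 <= b ->
  P <= (sqrt U + sqrt V) ^ 2 -> U <= a ^ 2 -> V <= b ^ 2 -> P <= (a + b) ^ 2.
Proof.
  intros Ha Hb HP HU HV. eapply Rle_trans; [exact HP|]. apply pow_incr. split.
  - pose proof (sqrt_pos U). pose proof (sqrt_pos V). lra.
  - apply Rplus_le_compat; apply sqrt_le_of_le_sq; assumption.
Qed.

Lemma head_sq_sub_le K x y z a b : 0 <= a -> 0 <= b ->
  head_sq K (subY x y) <= a ^ 2 -> head_sq K (subY y z) <= b ^ 2 ->
  head_sq K (subY x z) <= (a + b) ^ 2.
Proof.
  intros Ha Hb. apply sq_triangle_bound; [exact Ha|exact Hb|].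
  apply psum_sq_triangle; intros; [apply blocknorm_nonneg|apply blocknorm_sub_triangle].
Qed.

Lemma tail_sq_sub_le N K x y z a b : 0 <= a -> 0 <= b ->
  tail_sq N K (subY x y) <= a ^ 2 -> tail_sq N K (subY y z) <= b ^ 2 ->
  tail_sq N K (subY x z) <= (a + b) ^ 2.
Proof.
  intros Ha Hb. apply sq_triangle_bound; [exact Ha|exact Hb|].
  apply psum_sq_triangle; intros c; destruct (c <? N)%nat;
    try lra; [apply blocknorm_nonneg|apply blocknorm_sub_triangle].
Qed.

Lemma tail_sq_sub_sym N K x y : tail_sq N K (subY x y) = tail_sq N K (subY y x).
Proof. apply psum_ext; intros; rewrite blocknorm_sub_sym; reflexivity. Qed.

Lemma summable_bound z : summable z -> exists M, forall K, head_sq K z <= M.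
Proof.
  intros [l Hl]. exists l. intro K.
  apply (infinite_sum_ge_psum _ _ Hl). intros; apply pow2_ge_0.
Qed.

Lemma summable_sub x y : inY x -> inY y -> summable (subY x y).
Proof.
  intros [_ Hx] [_ Hy].
  destruct (summable_bound x Hx) as [Mx HMx]. destruct (summable_bound y Hy) as [My HMy].
  apply (infinite_sum_of_bounded _ (2 * Mx + 2 * My)); [intros; apply pow2_ge_0|]. intro K.
  apply Rle_trans with (2 * head_sq K x + 2 * head_sq K y); [|specialize (HMx K); specialize (HMy K); lra].
  unfold head_sq. rewrite <- !psum_scal.
  apply Rle_trans with (psum (fun b => 2 * blocknorm x b ^ 2 + 2 * blocknorm y b ^ 2) K).
  - apply psum_le; intros b _.
    pose proof (blocknorm_sub_le x y b). pose proof (blocknorm_nonneg (subY x y) b).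
    pose proof (blocknorm_nonneg x b). pose proof (blocknorm_nonneg y b).
    assert (0 <= (blocknorm x b - blocknorm y b) ^ 2) by apply pow2_ge_0. nra.
  - clear. induction K as [|K IH]; simpl in *; lra.
Qed.

Lemma normY_nonneg z : 0 <= normY z.
Proof. apply sqrt_pos. Qed.

Lemma normY_sq_spec z : summable z ->
  infinite_sum (fun n => blocknorm z n ^ 2)
    (epsilon (inhabits 0) (fun l => infinite_sum (fun n => blocknorm z n ^ 2) l)).
Proof. apply epsilon_spec. Qed.

Lemma normY_le z X : summable z -> 0 <= X -> (forall K, head_sq K z <= X ^ 2) -> normY z <= X.
Proof.
  intros Hs HX H. apply sqrt_le_of_le_sq; [exact HX|].
  exact (infinite_sum_le _ _ _ (normY_sq_spec z Hs) H).
Qed.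

Lemma head_sq_le_normY z K : summable z -> head_sq K z <= normY z ^ 2.
Proof.
  intros Hs. pose proof (normY_sq_spec z Hs) as Hl. set (l := epsilon _ _) in *.
  assert (head_sq K z <= l) by (apply (infinite_sum_ge_psum _ _ Hl); intros; apply pow2_ge_0).
  pose proof (head_sq_nonneg K z). unfold normY. fold l. rewrite sqrt_sq; lra.
Qed.

Lemma sqrt_head_sq_le_normY z K : summable z -> sqrt (head_sq K z) <= normY z.
Proof. intros Hs. apply sqrt_le_of_le_sq; [apply normY_nonneg|apply head_sq_le_normY, Hs]. Qed.

Lemma tail_sq_le_normY N K z : summable z -> (N <= K)%nat -> tail_sq N K z <= normY z ^ 2.
Proof.
  intros Hs HK. rewrite <- (head_sq_le_normY z K Hs).
  rewrite (head_sq_split N K z HK). pose proof (head_sq_nonneg N z). lra.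
Qed.

Lemma coord_le_normY z b k : summable z -> (k <= b)%nat -> Rabs (z b k) <= normY z.
Proof.
  intros Hs Hk. apply Rle_trans with (blocknorm z b); [exact (maxabs_ge _ b k Hk)|].
  rewrite <- (sqrt_pow2 _ (blocknorm_nonneg z b)).
  apply Rle_trans with (sqrt (head_sq (S b) z)); [apply sqrt_le_1_alt, blocknorm_sq_le_head_sq|].
  apply sqrt_head_sq_le_normY, Hs.
Qed.

Lemma normY_le_head_tail N z X : summable z -> 0 <= X ->
  (forall K, (N <= K)%nat -> head_sq N z + tail_sq N K z <= X ^ 2) -> normY z <= X.
Proof.
  intros Hs HX H. apply normY_le; [exact Hs|exact HX|]. intro K.
  apply Rle_trans with (head_sq (Nat.max K N) z); [apply head_sq_mono; lia|].
  rewrite (head_sq_split N) by lia. apply H; lia.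
Qed.

Lemma tail_sq_small z eta : summable z -> 0 < eta -> exists N, forall K, tail_sq N K z <= eta.
Proof.
  intros Hs He. pose proof (normY_sq_spec z Hs) as Hl. set (l := epsilon _ _) in *.
  destruct (Hl eta He) as [N0 HN]. exists (S N0). intro K.
  specialize (HN N0 ltac:(lia)). rewrite sum_f_R0_psum in HN. unfold Rdist in HN.
  apply Rabs_def2 in HN.
  destruct (Compare_dec.le_lt_dec (S N0) K) as [Hk|Hk].
  - pose proof (head_sq_split (S N0) K z Hk).
    assert (head_sq K z <= l) by (apply (infinite_sum_ge_psum _ _ Hl); intros; apply pow2_ge_0).
    unfold head_sq in *. lra.
  - unfold tail_sq. rewrite (psum_ext _ (fun _ => 0)), psum_zero; [lra|].
    intros b Hb. replace (b <? S N0)%nat with true by (symmetry; apply Nat.ltb_lt; lia). ring.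
Qed.

Lemma dY_self x : inY x -> dY x x = 0.
Proof.
  intros Hx. apply Rle_antisym; [|apply normY_nonneg].
  apply normY_le; [apply summable_sub; auto|lra|]. intro K.
  unfold head_sq. rewrite (psum_ext _ (fun _ => 0)), psum_zero; [lra|].
  intros b _. rewrite blocknorm_sub_self. ring.
Qed.

Lemma dY_sym x y : inY x -> inY y -> dY x y = dY y x.
Proof.
  intros Hx Hy. unfold dY.
  apply Rle_antisym; apply normY_le; try apply summable_sub; auto; try apply normY_nonneg;
    intro K; unfold head_sq; erewrite psum_ext by (intros; rewrite blocknorm_sub_sym; reflexivity);
    apply head_sq_le_normY, summable_sub; auto.
Qed.

Lemma dY_triangle x y z : inY x -> inY y -> inY z -> dY x z <= dY x y + dY y z.
Proof.
  intros Hx Hy Hz. unfold dY. pose proof (normY_nonneg (subY x y)).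
  pose proof (normY_nonneg (subY y z)).
  apply normY_le; [apply summable_sub; auto|lra|]. intro K.
  apply (head_sq_sub_le K x y z); auto; apply head_sq_le_normY, summable_sub; auto.
Qed.

Lemma dY_eq_0 x y : inY x -> inY y -> dY x y <= 0 -> x = y.
Proof.
  intros Hx Hy H. extensionality n; extensionality k.
  destruct (Compare_dec.le_lt_dec k n) as [Hk|Hk].
  - pose proof (coord_le_normY (subY x y) n k (summable_sub x y Hx Hy) Hk).
    fold (dY x y) in *. unfold subY in *.
    destruct (Req_dec (x n k - y n k) 0) as [E|E]; [lra|].
    apply Rabs_pos_lt in E. lra.
  - destruct Hx as [Hx _]; destruct Hy as [Hy _]. rewrite Hx, Hy; auto.
Qed.

Definition scaleY (c : R) (x : seqY) : seqY := fun b k => c * x b k.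

Lemma head_sq_scale K c x : head_sq K (scaleY c x) = c ^ 2 * head_sq K x.
Proof.
  unfold head_sq. rewrite <- psum_scal. apply psum_ext; intros.
  unfold blocknorm, scaleY. rewrite maxabs_scal, Rpow_mult_distr, pow2_abs. ring.
Qed.

Lemma inY_scale c x : inY x -> inY (scaleY c x).
Proof.
  intros [Z Hs]. split.
  - intros n k H. unfold scaleY. rewrite Z by exact H. ring.
  - destruct (summable_bound x Hs) as [M HM].
    apply (infinite_sum_of_bounded _ (c ^ 2 * M)); [intros; apply pow2_ge_0|]. intro K.
    change (head_sq K (scaleY c x) <= c ^ 2 * M). rewrite head_sq_scale.
    apply Rmult_le_compat_l; [apply pow2_ge_0|apply HM].
Qed.

Lemma dY_scale c x y : 0 < c -> inY x -> inY y -> dY (scaleY c x) (scaleY c y) = c * dY x y.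
Proof.
  intros Hc Hx Hy.
  assert (E : subY (scaleY c x) (scaleY c y) = scaleY c (subY x y)).
  { extensionality b; extensionality k. unfold subY, scaleY. ring. }
  assert (Hs : summable (subY (scaleY c x) (scaleY c y))) by (apply summable_sub; apply inY_scale; auto).
  pose proof (summable_sub x y Hx Hy) as Hs'.
  unfold dY in *. rewrite E in *. pose proof (normY_nonneg (subY x y)).
  apply Rle_antisym.
  - apply normY_le; [exact Hs|nra|]. intro K. rewrite head_sq_scale, Rpow_mult_distr.
    apply Rmult_le_compat_l; [apply pow2_ge_0|apply head_sq_le_normY, Hs'].
  - cut (normY (subY x y) <= / c * normY (scaleY c (subY x y))).
    { intros H1. apply Rmult_le_compat_l with (r := c) in H1; [|lra].
      rewrite <- Rmult_assoc, Rinv_r, Rmult_1_l in H1 by lra. exact H1. }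
    pose proof (normY_nonneg (scaleY c (subY x y))).
    apply normY_le; [exact Hs'|apply Rmult_le_pos; [apply Rlt_le, Rinv_0_lt_compat|]; lra|].
    intro K. pose proof (head_sq_le_normY _ K Hs) as H1. rewrite head_sq_scale in H1.
    rewrite Rpow_mult_distr, pow_inv.
    apply Rmult_le_reg_l with (c ^ 2); [nra|]. rewrite <- Rmult_assoc, Rinv_r, Rmult_1_l by nra. exact H1.
Qed.

(** * The tree metric *)

Lemma common_prefix_len_app p a b :
  common_prefix_len (p ++ a) (p ++ b) = (length p + common_prefix_len a b)%nat.
Proof. induction p as [|x p IH]; simpl; [reflexivity|]. rewrite Nat.eqb_refl, IH; reflexivity. Qed.

Lemma common_prefix_len_sym s t : common_prefix_len s t = common_prefix_len t s.
Proof.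
  revert t; induction s as [|a s IH]; destruct t as [|b t]; simpl; auto.
  rewrite Nat.eqb_sym. destruct (Nat.eqb b a); auto.
Qed.

Lemma common_prefix_len_le s t :
  (common_prefix_len s t <= length s /\ common_prefix_len s t <= length t)%nat.
Proof.
  revert t; induction s as [|a s IH]; destruct t as [|b t]; simpl; try lia.
  destruct (Nat.eqb a b); [specialize (IH t); lia|lia].
Qed.

Lemma common_prefix_len_min s t p :
  (Nat.min (common_prefix_len s t) (common_prefix_len t p) <= common_prefix_len s p)%nat.
Proof.
  revert t p; induction s as [|a s IH]; destruct t as [|b t], p as [|c p]; simpl; try lia.
  destruct (Nat.eqb a b) eqn:E1, (Nat.eqb b c) eqn:E2; try lia.
  apply Nat.eqb_eq in E1, E2; subst. rewrite Nat.eqb_refl. specialize (IH t p). lia.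
Qed.

Lemma common_prefix_len_full s t :
  common_prefix_len s t = length s -> length s = length t -> s = t.
Proof.
  revert t; induction s as [|a s IH]; destruct t as [|b t]; simpl; intros; try lia; auto.
  destruct (Nat.eqb a b) eqn:E; [|lia]. apply Nat.eqb_eq in E; subst. f_equal. apply IH; lia.
Qed.

Lemma dT_eq s t :
  dT s t = INR (length s) + INR (length t) - 2 * INR (common_prefix_len s t).
Proof.
  unfold dT. pose proof (common_prefix_len_le s t).
  rewrite minus_INR by lia. rewrite plus_INR, mult_INR. simpl. ring.
Qed.

Lemma dT_sym s t : dT s t = dT t s.
Proof. rewrite !dT_eq, common_prefix_len_sym. ring. Qed.

Lemma dT_nonneg s t : 0 <= dT s t.
Proof. apply pos_INR. Qed.

Lemma dT_triangle s t p : dT s p <= dT s t + dT t p.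
Proof.
  rewrite !dT_eq. pose proof (common_prefix_len_min s t p).
  pose proof (common_prefix_len_le s t). pose proof (common_prefix_len_le t p).
  assert (INR (common_prefix_len s t) + INR (common_prefix_len t p)
          <= INR (length t) + INR (common_prefix_len s p)) by (rewrite <- !plus_INR; apply le_INR; lia).
  lra.
Qed.

Lemma dT_eq_0 s t : dT s t = 0 -> s = t.
Proof.
  unfold dT. intros H. change 0 with (INR 0) in H. apply INR_eq in H.
  pose proof (common_prefix_len_le s t). apply common_prefix_len_full; lia.
Qed.

Lemma dT_pos s t : s <> t -> 0 < dT s t.
Proof.
  intros H. destruct (Rle_lt_or_eq_dec 0 (dT s t) (dT_nonneg s t)) as [|E]; auto.
  exfalso; apply H, dT_eq_0; auto.
Qed.

Lemma vertex_meet s t : exists p s' t',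
  s = p ++ s' /\ t = p ++ t' /\ common_prefix_len s' t' = 0%nat.
Proof.
  revert t; induction s as [|a s IH]; intros t.
  - exists [], [], t; auto.
  - destruct t as [|b t]; [exists [], (a :: s), []; auto|].
    destruct (Nat.eq_dec a b) as [<-|Hab].
    + destruct (IH t) as (p & s' & t' & -> & -> & H). exists (a :: p), s', t'; auto.
    + exists [], (a :: s), (b :: t); simpl; repeat split.
      apply Nat.eqb_neq in Hab; rewrite Hab; reflexivity.
Qed.

Lemma dT_meet p s' t' :
  common_prefix_len s' t' = 0%nat -> dT (p ++ s') (p ++ t') = INR (length s' + length t').
Proof. intros H. unfold dT. rewrite common_prefix_len_app, H, !length_app. f_equal; lia. Qed.

Lemma dT_self s : dT s s = 0.
Proof. rewrite <- (app_nil_r s), dT_meet; reflexivity. Qed.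

Lemma dT_child t c : dT (t ++ [c]) t = 1.
Proof. rewrite <- (app_nil_r t) at 2. rewrite dT_meet by reflexivity. reflexivity. Qed.

Lemma dT_siblings t n m : n <> m -> dT (t ++ [n]) (t ++ [m]) = 2.
Proof.
  intros H. rewrite dT_meet; [simpl; lra|].
  simpl. apply Nat.eqb_neq in H; rewrite H; reflexivity.
Qed.

(** * Finite subsets embed isometrically *)

Lemma bounded_on_list (g : vertex -> R) F : exists M, forall t, In t F -> g t <= M.
Proof.
  induction F as [|a F [M HM]]; [exists 0; intros t []|].
  exists (Rmax (g a) M). intros t [<-|Ht]; [apply Rmax_l|].
  apply Rle_trans with M; [auto|apply Rmax_r].
Qed.

Lemma bounded_on_pairs (h : vertex -> vertex -> R) F :
  exists M, forall s t, In s F -> In t F -> h s t <= M.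
Proof.
  induction F as [|a F [M HM]]; [exists 0; intros s t []|].
  destruct (bounded_on_list (h a) (a :: F)) as [M1 H1].
  destruct (bounded_on_list (fun s => h s a) (a :: F)) as [M2 H2].
  exists (Rmax M (Rmax M1 M2)).
  assert (M1 <= Rmax M (Rmax M1 M2)) by (eapply Rle_trans; [apply Rmax_l|apply Rmax_r]).
  assert (M2 <= Rmax M (Rmax M1 M2)) by (eapply Rle_trans; [apply Rmax_r|apply Rmax_r]).
  assert (M <= Rmax M (Rmax M1 M2)) by apply Rmax_l.
  intros s t [<-|Hs] [<-|Ht].
  - specialize (H1 a (or_introl eq_refl)); lra.
  - specialize (H1 t (or_intror Ht)); lra.
  - specialize (H2 s (or_intror Hs)); lra.
  - specialize (HM s t Hs Ht); lra.
Qed.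

Definition pair_values (F : list vertex) (h : vertex -> vertex -> R) : R -> Prop :=
  fun r => exists s t, In s F /\ In t F /\ s <> t /\ r = h s t.

Lemma lub_of_pair_values F h s0 t0 : In s0 F -> In t0 F -> s0 <> t0 ->
  is_lub (pair_values F h) (lub_of (pair_values F h)).
Proof.
  intros H1 H2 H3. unfold lub_of. apply epsilon_spec, upper_bound_thm.
  - destruct (bounded_on_pairs h F) as [M HM]. exists M. intros r (s & t & Hs & Ht & _ & ->). auto.
  - exists (h s0 t0), s0, t0; auto.
Qed.

Lemma lub_of_pair_values_const F h s0 t0 : In s0 F -> In t0 F -> s0 <> t0 ->
  (forall s t, In s F -> In t F -> s <> t -> h s t = 1) -> lub_of (pair_values F h) = 1.
Proof.
  intros H1 H2 H3 Hc. apply (is_lub_u _ _ _ (lub_of_pair_values F h s0 t0 H1 H2 H3)). split.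
  - intros r (s & t & Hs & Ht & Hst & ->). rewrite Hc; auto; lra.
  - intros b Hb. apply Hb. exists s0, t0. rewrite Hc; auto.
Qed.

Lemma distortion_ge_1 F c : (exists s t, In s F /\ In t F /\ s <> t) -> distortions F c -> 1 <= c.
Proof.
  intros (s & t & Hs & Ht & Hst) (f & Hin & Hinj & ->).
  assert (Hd : 0 < dT s t) by (apply dT_pos; auto).
  assert (Hy : 0 < dY (f s) (f t)).
  { destruct (Rle_or_lt (dY (f s) (f t)) 0) as [Hle|]; auto.
    exfalso. apply Hst, Hinj; auto. apply dY_eq_0; auto. }
  assert (H1 : dY (f s) (f t) / dT s t <= LipF F f).
  { apply (lub_of_pair_values F (fun s t => dY (f s) (f t) / dT s t) s t Hs Ht Hst). exists s, t; auto. }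
  assert (H2 : dT s t / dY (f s) (f t) <= LipInvF F f).
  { apply (lub_of_pair_values F (fun s t => dT s t / dY (f s) (f t)) s t Hs Ht Hst). exists s, t; auto. }
  assert ((dY (f s) (f t) / dT s t) * (dT s t / dY (f s) (f t)) = 1) by (field; lra).
  assert (0 < dY (f s) (f t) / dT s t) by (apply Rdiv_lt_0_compat; auto).
  assert (0 < dT s t / dY (f s) (f t)) by (apply Rdiv_lt_0_compat; auto).
  nra.
Qed.

Definition frechet (F : list vertex) (s : vertex) : seqY :=
  fun n k => if (n =? pred (length F))%nat
             then (if (k <=? n)%nat then dT s (nth k F []) else 0) else 0.

Lemma blocknorm_frechet_other F s t b :
  b <> pred (length F) -> blocknorm (subY (frechet F s) (frechet F t)) b = 0.
Proof.
  intros H. apply blocknorm_zero. intros k _. unfold subY, frechet.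
  apply Nat.eqb_neq in H; rewrite H. ring.
Qed.

Lemma blocknorm_frechet F s t : In s F -> In t F ->
  blocknorm (subY (frechet F s) (frechet F t)) (pred (length F)) = dT s t.
Proof.
  intros Hs Ht. set (m := pred (length F)). unfold blocknorm, subY, frechet. fold m.
  rewrite Nat.eqb_refl. apply Rle_antisym.
  - apply maxabs_le. intros k Hk. apply Nat.leb_le in Hk; rewrite Hk.
    pose proof (dT_triangle s t (nth k F [])). pose proof (dT_triangle t s (nth k F [])).
    rewrite (dT_sym t s) in *. apply Rabs_le. lra.
  - destruct (In_nth F s [] Hs) as [k [Hk Hn]].
    assert (Hkm : (k <= m)%nat) by (unfold m; lia).
    eapply Rle_trans; [|exact (maxabs_ge _ m k Hkm)]. cbv beta.
    apply Nat.leb_le in Hkm. rewrite Hkm, Hn, dT_self, Rminus_0_l, Rabs_Ropp, dT_sym.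
    apply Rle_abs.
Qed.

Lemma inY_frechet F s : inY (frechet F s).
Proof.
  split.
  - intros n k Hnk. unfold frechet. destruct (n =? _)%nat; auto.
    replace (k <=? n)%nat with false by (symmetry; apply Nat.leb_gt; lia). reflexivity.
  - apply (infinite_sum_of_bounded _ (blocknorm (frechet F s) (pred (length F)) ^ 2));
      [intros; apply pow2_ge_0|].
    intro K. apply (psum_single (fun b => blocknorm (frechet F s) b ^ 2)); [|apply pow2_ge_0].
    intros b Hb.
    rewrite blocknorm_zero; [ring|]. intros k _. unfold frechet.
    apply Nat.eqb_neq in Hb; rewrite Hb; reflexivity.
Qed.

Lemma dY_frechet F s t : In s F -> In t F -> dY (frechet F s) (frechet F t) = dT s t.
Proof.
  intros Hs Ht. pose proof (blocknorm_frechet F s t Hs Ht) as Hb.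
  assert (Hz : summable (subY (frechet F s) (frechet F t))) by (apply summable_sub; apply inY_frechet).
  apply Rle_antisym.
  - apply normY_le; [exact Hz|apply dT_nonneg|]. intro K. rewrite <- Hb.
    apply (psum_single (fun b => blocknorm (subY (frechet F s) (frechet F t)) b ^ 2));
      [|apply pow2_ge_0].
    intros b Hb'. rewrite blocknorm_frechet_other by exact Hb'. ring.
  - rewrite <- Hb, <- (sqrt_pow2 _ (blocknorm_nonneg _ _)).
    eapply Rle_trans; [apply sqrt_le_1_alt, blocknorm_sq_le_head_sq|].
    apply sqrt_head_sq_le_normY, Hz.
Qed.

Lemma cY_is_1 F : (exists s t, In s F /\ In t F /\ s <> t) -> cY_is F 1.
Proof.
  intros Hne. split; [intros c; apply distortion_ge_1, Hne|].
  intros b Hb. apply Hb. destruct Hne as (s0 & t0 & Hs0 & Ht0 & Hst0).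
  exists (frechet F). split; [intros; apply inY_frechet|]. split.
  - intros s t Hs Ht E. apply dT_eq_0.
    rewrite <- (dY_frechet F s t Hs Ht), E. apply dY_self, inY_frechet.
  - unfold LipF, LipInvF. fold (pair_values F (fun s t => dY (frechet F s) (frechet F t) / dT s t)).
    fold (pair_values F (fun s t => dT s t / dY (frechet F s) (frechet F t))).
    rewrite !(lub_of_pair_values_const F _ s0 t0 Hs0 Ht0 Hst0); [ring| |];
      intros s t Hs Ht Hst; rewrite dY_frechet by auto; field; apply Rgt_not_eq, dT_pos, Hst.
Qed.

(** * Pigeonhole principle for bounded sequences in finite dimension *)

Definition infinitely (P : nat -> Prop) : Prop := forall M, exists n, (M <= n)%nat /\ P n.

Lemma infinitely_or P Q1 Q2 : infinitely P -> (forall n, P n -> Q1 n \/ Q2 n) ->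
  infinitely (fun n => P n /\ Q1 n) \/ infinitely (fun n => P n /\ Q2 n).
Proof.
  intros HP H. destruct (classic (infinitely (fun n => P n /\ Q1 n))) as [|N1]; [left; auto|right].
  assert (HM : exists M1, forall n, (M1 <= n)%nat -> ~ (P n /\ Q1 n)).
  { apply NNPP; intros C. apply N1. intros M. apply NNPP; intros C2.
    apply C. exists M. intros n Hn HPQ. apply C2. exists n; auto. }
  destruct HM as [M1 HM1]. intros M. destruct (HP (Nat.max M M1)) as [n [Hn Pn]].
  exists n. split; [lia|]. split; [exact Pn|].
  destruct (H n Pn); auto. exfalso; apply (HM1 n); [lia|auto].
Qed.

Lemma infinitely_in_interval (v : nat -> R) d : 0 < d -> forall K a P, infinitely P ->
  (forall n, P n -> a <= v n <= a + INR K * d) ->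
  exists c, infinitely (fun n => P n /\ c <= v n <= c + d).
Proof.
  intros Hd K; induction K as [|K IH]; intros a P HP H.
  - exists a. intros M. destruct (HP M) as [n [Hn Pn]]. exists n.
    specialize (H n Pn). simpl in H. repeat split; auto; lra.
  - destruct (infinitely_or P (fun n => v n <= a + d) (fun n => a + d <= v n) HP) as [H1|H2].
    { intros n _. destruct (Rle_or_lt (v n) (a + d)); [left|right]; lra. }
    + exists a. intros M. destruct (H1 M) as [n [Hn [Pn Hv]]]. exists n.
      specialize (H n Pn). repeat split; auto; lra.
    + destruct (IH (a + d) (fun n => P n /\ a + d <= v n) H2) as [c Hc].
      { intros n [Pn Hv]. specialize (H n Pn). rewrite S_INR in H. split; lra. }
      exists c. intros M. destruct (Hc M) as [n [Hn [[Pn _] Hv]]]. exists n; auto.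
Qed.

Lemma infinitely_close (w : nat -> nat * nat -> R) Bd d : 0 < d ->
  forall (L : list (nat * nat)) P, infinitely P ->
  (forall n c, In c L -> Rabs (w n c) <= Bd) ->
  exists P', (forall n, P' n -> P n) /\ infinitely P' /\
    forall n m c, P' n -> P' m -> In c L -> Rabs (w n c - w m c) <= d.
Proof.
  intros Hd L; induction L as [|c0 L IH]; intros P HP HB.
  - exists P; repeat split; auto. intros n m c _ _ [].
  - destruct (INR_unbounded (2 * Bd / d)) as [K HK].
    assert (HKd : 2 * Bd <= INR K * d).
    { apply Rmult_gt_compat_r with (r := d) in HK; auto. unfold Rdiv in HK.
      rewrite Rmult_assoc, Rinv_l in HK; lra. }
    destruct (infinitely_in_interval (fun n => w n c0) d Hd K (- Bd) P HP) as [c Hc].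
    { intros n _. specialize (HB n c0 (or_introl eq_refl)).
      pose proof (Rle_abs (w n c0)). pose proof (Rle_abs (- w n c0)). rewrite Rabs_Ropp in *. lra. }
    destruct (IH _ Hc (fun n c H => HB n c (or_intror H))) as (P' & Hsub & HP' & Hclose).
    exists P'. split; [intros n Hn; apply Hsub, Hn|]. split; [exact HP'|].
    intros n m c' Hn Hm [<-|Hc'].
    + destruct (Hsub n Hn) as [_ Hn']. destruct (Hsub m Hm) as [_ Hm']. apply Rabs_le. lra.
    + apply Hclose; auto.
Qed.

Lemma head_cluster (x : nat -> seqY) N Bd eps : 0 < eps ->
  (forall n b k, (k <= b)%nat -> Rabs (x n b k) <= Bd) ->
  exists n m, n <> m /\ head_sq N (subY (x n) (x m)) <= eps.
Proof.
  intros Heps HB.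
  assert (HN1 : 0 < INR N + 1) by (pose proof (pos_INR N); lra).
  set (d := sqrt (eps / (INR N + 1))).
  assert (Hd : 0 < d) by (apply sqrt_lt_R0, Rdiv_lt_0_compat; auto).
  assert (Hd2 : INR N * d ^ 2 <= eps).
  { unfold d. rewrite sqrt_sq by (apply Rlt_le, Rdiv_lt_0_compat; auto).
    apply Rmult_le_reg_r with (INR N + 1); [exact HN1|]. unfold Rdiv.
    rewrite Rmult_assoc, (Rmult_assoc eps), Rinv_l by lra. pose proof (pos_INR N). nra. }
  set (w := fun n (c : nat * nat) => if (snd c <=? fst c)%nat then x n (fst c) (snd c) else 0).
  destruct (infinitely_close w (Rabs Bd) d Hd (list_prod (seq 0 N) (seq 0 N)) (fun _ => True))
    as (P & _ & HP & Hclose).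
  { intros M. exists M; auto. }
  { intros n [b k] _. unfold w; simpl. destruct (k <=? b)%nat eqn:E.
    - apply Nat.leb_le in E. eapply Rle_trans; [apply HB, E|apply Rle_abs].
    - rewrite Rabs_R0. apply Rabs_pos. }
  destruct (HP 0%nat) as [n [_ Pn]]. destruct (HP (S n)) as [m [Hm Pm]].
  exists n, m. split; [lia|].
  eapply Rle_trans; [|exact Hd2]. apply psum_le_const. intros b Hb.
  assert (blocknorm (subY (x n) (x m)) b <= d).
  { apply maxabs_le. intros k Hk. unfold subY.
    replace (x n b k - x m b k) with (w n (b, k) - w m (b, k))
      by (unfold w; simpl; apply Nat.leb_le in Hk; rewrite Hk; reflexivity).
    apply Hclose; auto. apply in_prod; apply in_seq; lia. }
  pose proof (blocknorm_nonneg (subY (x n) (x m)) b). nra.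
Qed.

(** * Edge-Lipschitz maps and stretched copies of the tree *)

Lemma list_snoc_ind (P : list nat -> Prop) :
  P [] -> (forall r n, P r -> P (r ++ [n])) -> forall r, P r.
Proof. intros H0 H1 r. rewrite <- (rev_involutive r). induction (rev r); simpl; auto. Qed.

Lemma lipschitz_of_edges (g : vertex -> seqY) L : (forall s, inY (g s)) ->
  (forall s n, dY (g (s ++ [n])) (g s) <= L) -> forall s t, dY (g s) (g t) <= L * dT s t.
Proof.
  intros Hin He.
  assert (Hanc : forall r a, dY (g (a ++ r)) (g a) <= L * INR (length r)).
  { intros r; induction r as [|r n IH] using list_snoc_ind; intros a.
    - rewrite app_nil_r, dY_self by apply Hin. simpl; lra.
    - rewrite app_assoc, length_app, plus_INR.
      eapply Rle_trans; [apply (dY_triangle _ (g (a ++ r))); auto|].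
      specialize (IH a). specialize (He (a ++ r) n). simpl. lra. }
  intros s t. destruct (vertex_meet s t) as (p & s' & t' & -> & -> & H).
  rewrite dT_meet, plus_INR by exact H.
  eapply Rle_trans; [apply (dY_triangle _ (g p)); auto|]. rewrite (dY_sym (g p)) by auto.
  pose proof (Hanc s' p). pose proof (Hanc t' p). lra.
Qed.

(* [stretch W v s] replaces the [n]-th edge below [u] by the path from [u] to [W u n]. *)
Fixpoint stretch (W : vertex -> nat -> vertex) (v : vertex) (s : vertex) : vertex :=
  match s with [] => v | n :: r => stretch W (W v n) r end.

Lemma stretch_app W s r v : stretch W v (s ++ r) = stretch W (stretch W v s) r.
Proof. revert v; induction s; simpl; auto. Qed.

Lemma stretch_snoc W s n : stretch W [] (s ++ [n]) = W (stretch W [] s) n.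
Proof. rewrite stretch_app. reflexivity. Qed.

Section Stretch.

Variables (W : vertex -> nat -> vertex) (m : nat).
Hypothesis W_path : forall v n, exists r, W v n = v ++ n :: r /\ length r = m.

Lemma stretch_shape a v : exists psi, stretch W v a = v ++ psi /\
  length psi = (S m * length a)%nat /\ (a = [] -> psi = []) /\
  (forall n a', a = n :: a' -> exists psi', psi = n :: psi').
Proof.
  revert v; induction a as [|n a IH]; intros v.
  - exists []. rewrite app_nil_r. repeat split; auto; try (simpl; lia); discriminate.
  - simpl. destruct (W_path v n) as [r [Er Lr]]. destruct (IH (W v n)) as (psi & E & Lp & _ & _).
    exists (n :: r ++ psi). rewrite E, Er, <- app_assoc. repeat split; auto.
    + simpl. rewrite length_app. lia.
    + discriminate.
    + intros n' a' Heq. injection Heq as <- <-. eauto.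
Qed.

Lemma dT_stretch s t : dT (stretch W [] s) (stretch W [] t) = INR (S m) * dT s t.
Proof.
  destruct (vertex_meet s t) as (p & s' & t' & -> & -> & H). rewrite !stretch_app.
  destruct (stretch_shape s' (stretch W [] p)) as (p1 & E1 & L1 & N1 & C1).
  destruct (stretch_shape t' (stretch W [] p)) as (p2 & E2 & L2 & N2 & C2).
  rewrite E1, E2, !dT_meet.
  - rewrite L1, L2, <- mult_INR. f_equal. lia.
  - exact H.
  - destruct s' as [|n1 s'']; [rewrite N1; auto|].
    destruct t' as [|n2 t'']; [rewrite N2 by auto; destruct p1; auto|].
    destruct (C1 n1 s'' eq_refl) as [q1 ->]. destruct (C2 n2 t'' eq_refl) as [q2 ->].
    simpl in H |- *. destruct (Nat.eqb n1 n2); [discriminate|reflexivity].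
Qed.

End Stretch.

(** * No bi-Lipschitz embedding of the whole tree *)

Lemma pythagorean_growth a beta C s : 0 <= a -> 0 <= beta -> 0 <= C -> 0 <= s ->
  s <= a * beta + C * sqrt a ->
  sqrt ((beta + s) ^ 2 + C ^ 2) <= (a + 1) * beta + C * sqrt (a + 1).
Proof.
  intros Ha Hbeta HC Hs H.
  assert (Hra : 0 <= sqrt a) by apply sqrt_pos.
  assert (Hrab : sqrt a <= sqrt (a + 1)) by (apply sqrt_le_1_alt; lra).
  pose proof (sqrt_sq a Ha) as Ea. pose proof (sqrt_sq (a + 1) ltac:(lra)) as Eb.
  apply sqrt_le_of_le_sq; [nra|].
  assert ((beta + s) ^ 2 <= ((a + 1) * beta + C * sqrt a) ^ 2) by (apply pow_incr; lra).
  assert (0 <= (a + 1) * beta * C) by (apply Rmult_le_pos; [apply Rmult_le_pos|]; lra).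
  nra.
Qed.

Lemma large_dilation beta C delta : 0 <= beta -> 0 <= C -> 0 < delta ->
  exists m, (beta + C / sqrt (INR (S m))) ^ 2 <= beta ^ 2 + delta.
Proof.
  intros Hbeta HC Hdelta. set (D := 2 * beta * C + C ^ 2).
  assert (HD : 0 <= D / delta) by (unfold D; apply Rmult_le_pos; [nra|apply Rlt_le, Rinv_0_lt_compat, Hdelta]).
  destruct (INR_unbounded ((D / delta) ^ 2)) as [m Hm]. exists m.
  set (q := sqrt (INR (S m))).
  assert (Eq : q ^ 2 = INR m + 1) by (unfold q; rewrite sqrt_sq, S_INR by apply pos_INR; reflexivity).
  assert (Hq0 : 0 <= q) by apply sqrt_pos.
  assert (Hq1 : 1 <= q) by (pose proof (pos_INR m); nra).
  assert (HDq : D / delta <= q) by nra.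
  assert (HDq' : D <= delta * q).
  { apply Rmult_le_compat_l with (r := delta) in HDq; [|lra].
    unfold Rdiv in HDq. rewrite Rmult_comm, Rmult_assoc, Rinv_l, Rmult_1_r in HDq by lra. exact HDq. }
  set (t := / q). change (C / q) with (C * t).
  assert (Hqt : q * t = 1) by (unfold t; field; lra).
  assert (Ht0 : 0 < t) by (apply Rinv_0_lt_compat; lra).
  assert (D * t <= delta) by nra.
  assert (C ^ 2 * (t * t) <= C ^ 2 * t) by (apply Rmult_le_compat_l; nra).
  unfold D in *. nra.
Qed.

Definition embeds_with (A B : R) : Prop :=
  exists f : vertex -> seqY, (forall s, inY (f s)) /\
    forall s t, A * dT s t <= dY (f s) (f t) <= B * dT s t.

Lemma subY_sub_common x y z : subY (subY x z) (subY y z) = subY x y.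
Proof. extensionality b; extensionality k. unfold subY. ring. Qed.

Section Improvement.

Variables (f : vertex -> seqY) (A B : R).
Hypotheses (A_pos : 0 < A) (f_inY : forall s, inY (f s))
  (f_biLip : forall s t, A * dT s t <= dY (f s) (f t) <= B * dT s t).

Lemma dY_child_le t c : dY (f (t ++ [c])) (f t) <= B.
Proof. destruct (f_biLip (t ++ [c]) t) as [_ H]. rewrite dT_child in H. lra. Qed.

Lemma A_le_B : A <= B.
Proof.
  destruct (f_biLip [0%nat] []) as [H1 H2]. pose proof (dT_child [] 0%nat) as E. simpl in E.
  rewrite E in H1, H2. lra.
Qed.

(* Infinitely many children at distance at most [B] cannot all carry most of their displacement
   in a fixed finite-dimensional head: two of them would then be closer than [2 A]. *)
Lemma small_head_child t N :
  exists c, head_sq N (subY (f (t ++ [c])) (f t)) <= B ^ 2 - 7 / 8 * A ^ 2.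
Proof.
  apply NNPP; intros Hno.
  set (x := fun c => subY (f (t ++ [c])) (f t)).
  assert (Hx : forall c, summable (x c)) by (intros; apply summable_sub; auto).
  assert (Htail : forall c K, (N <= K)%nat -> tail_sq N K (x c) <= 7 / 8 * A ^ 2).
  { intros c K HK. assert (B ^ 2 - 7 / 8 * A ^ 2 < head_sq N (x c)).
    { apply Rnot_le_lt. intros H. apply Hno. exists c. exact H. }
    pose proof (head_sq_split N K (x c) HK). pose proof (head_sq_le_normY (x c) K (Hx c)).
    assert (normY (x c) ^ 2 <= B ^ 2) by (apply pow_incr; split; [apply normY_nonneg|apply dY_child_le]).
    lra. }
  destruct (head_cluster x N B (A ^ 2 / 8)) as (n & m & Hnm & Hclose); [nra| |].
  { intros c b k Hk. eapply Rle_trans; [apply coord_le_normY; [apply Hx|exact Hk]|apply dY_child_le]. }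
  unfold x in Hclose. rewrite subY_sub_common in Hclose.
  set (a := sqrt (7 / 8 * A ^ 2)).
  assert (Ha : 0 <= a) by apply sqrt_pos.
  assert (Ea : a ^ 2 = 7 / 8 * A ^ 2) by (apply sqrt_sq; nra).
  assert (Hup : dY (f (t ++ [n])) (f (t ++ [m])) <= sqrt (A ^ 2 / 8 + (a + a) ^ 2)).
  { apply normY_le_head_tail with N; [apply summable_sub; auto|apply sqrt_pos|].
    intros K HK. rewrite sqrt_sq by nra. apply Rplus_le_compat; [exact Hclose|].
    apply (tail_sq_sub_le N K _ (f t)); auto; rewrite Ea; [apply (Htail n K HK)|].
    rewrite tail_sq_sub_sym. apply (Htail m K HK). }
  destruct (f_biLip (t ++ [n]) (t ++ [m])) as [Hlow _]. rewrite dT_siblings in Hlow by exact Hnm.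
  assert (Hsq : (A * 2) ^ 2 <= A ^ 2 / 8 + (a + a) ^ 2).
  { rewrite <- (sqrt_sq (A ^ 2 / 8 + (a + a) ^ 2)) by nra. apply pow_incr. lra. }
  nra.
Qed.

Lemma next_child_exists v u : exists c N,
  (forall K, tail_sq N K (subY (f u) (f v)) <= 1) /\
  head_sq N (subY (f (u ++ [c])) (f u)) <= B ^ 2 - 7 / 8 * A ^ 2.
Proof.
  destruct (tail_sq_small (subY (f u) (f v)) 1 (summable_sub _ _ (f_inY u) (f_inY v)) Rlt_0_1)
    as [N HN].
  destruct (small_head_child u N) as [c Hc]. exists c, N. split; assumption.
Qed.

Definition next_child (v u : vertex) : nat :=
  proj1_sig (constructive_indefinite_description _ (next_child_exists v u)).

Definition beta : R := sqrt (B ^ 2 - 7 / 8 * A ^ 2).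

Lemma beta_nonneg : 0 <= beta.
Proof. apply sqrt_pos. Qed.

Lemma beta_sq : beta ^ 2 = B ^ 2 - 7 / 8 * A ^ 2.
Proof. pose proof A_le_B. apply sqrt_sq. nra. Qed.

(* Going down along [next_child], the head of the new step and the tail of the previous
   displacement are both small, so distances add like orthogonal vectors. *)
Lemma dY_next_child v u :
  dY (f (u ++ [next_child v u])) (f v) <= sqrt ((beta + dY (f u) (f v)) ^ 2 + (B + 1) ^ 2).
Proof.
  unfold next_child. destruct (constructive_indefinite_description _ _) as [c [N [Htail Hhead]]].
  simpl. pose proof (normY_nonneg (subY (f u) (f v))). pose proof beta_nonneg. pose proof A_le_B.
  apply normY_le_head_tail with N; [apply summable_sub; auto|apply sqrt_pos|].
  intros K HK. rewrite sqrt_sq by (apply Rplus_le_le_0_compat; apply pow2_ge_0).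
  apply Rplus_le_compat.
  - apply (head_sq_sub_le N _ (f u)); auto; [rewrite beta_sq; exact Hhead|].
    apply head_sq_le_normY, summable_sub; auto.
  - apply (tail_sq_sub_le N K _ (f u)); try lra.
    + eapply Rle_trans; [apply tail_sq_le_normY; [apply summable_sub; auto|exact HK]|].
      apply pow_incr. split; [apply normY_nonneg|apply dY_child_le].
    + rewrite pow1. apply Htail.
Qed.

Fixpoint greedy_path (v : vertex) (n j : nat) : vertex :=
  match j with
  | O => v ++ [n]
  | S j' => greedy_path v n j' ++ [next_child v (greedy_path v n j')]
  end.

Lemma greedy_path_shape v n j : exists r, greedy_path v n j = v ++ n :: r /\ length r = j.
Proof.
  induction j as [|j [r [E L]]]; simpl; [exists []; auto|].
  rewrite E. exists (r ++ [next_child v (v ++ n :: r)]).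
  rewrite <- app_assoc, length_app. simpl. split; [reflexivity|lia].
Qed.

Lemma dY_greedy_path v n j :
  dY (f (greedy_path v n j)) (f v) <= INR (S j) * beta + (B + 1) * sqrt (INR (S j)).
Proof.
  pose proof beta_nonneg. pose proof A_le_B.
  induction j as [|j IH]; simpl greedy_path.
  - pose proof (dY_child_le v n). change (INR 1) with 1. rewrite sqrt_1. lra.
  - eapply Rle_trans; [apply dY_next_child|]. rewrite (S_INR (S j)).
    apply pythagorean_growth; try lra; [apply pos_INR|apply normY_nonneg].
Qed.

(* Rescaling the image of a stretched tree, where each edge becomes a greedy path of length [m + 1],
   keeps the lower constant [A] but lowers the Lipschitz constant on edges. *)
Lemma embeds_with_smaller : exists L, embeds_with A L /\ L ^ 2 <= B ^ 2 - A ^ 2 / 2.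
Proof.
  pose proof beta_nonneg. pose proof A_le_B.
  destruct (large_dilation beta (B + 1) (3 / 8 * A ^ 2)) as [m Hm]; try lra; [nra|].
  set (W := fun v n => greedy_path v n m).
  set (M := INR (S m)).
  assert (HM : 0 < M) by apply lt_0_INR, Nat.lt_0_succ.
  assert (HW : forall v n, exists r, W v n = v ++ n :: r /\ length r = m)
    by (intros v n; apply greedy_path_shape).
  set (G := fun s => scaleY (/ M) (f (stretch W [] s))).
  assert (HG : forall s, inY (G s)) by (intros; apply inY_scale, f_inY).
  exists (beta + (B + 1) / sqrt M). split; [|rewrite beta_sq in Hm; fold M in Hm; lra].
  exists G. split; [exact HG|]. intros s t. split.
  - unfold G. rewrite dY_scale by (auto; apply Rinv_0_lt_compat, HM).
    destruct (f_biLip (stretch W [] s) (stretch W [] t)) as [Hlow _].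
    rewrite (dT_stretch W m HW) in Hlow. fold M in Hlow.
    apply Rmult_le_reg_l with M; [exact HM|]. field_simplify; lra.
  - apply lipschitz_of_edges; [exact HG|].
    intros s0 n. unfold G. rewrite dY_scale, stretch_snoc by (auto; apply Rinv_0_lt_compat, HM).
    pose proof (dY_greedy_path (stretch W [] s0) n m) as Hp. fold M in Hp.
    assert (Hsq : sqrt M * sqrt M = M) by (apply sqrt_sqrt; lra).
    assert (0 < sqrt M) by (apply sqrt_lt_R0, HM).
    apply Rmult_le_reg_l with M; [exact HM|].
    replace (M * (/ M * dY (f (W (stretch W [] s0) n)) (f (stretch W [] s0))))
      with (dY (f (W (stretch W [] s0) n)) (f (stretch W [] s0))) by (field; lra).
    assert (E : M / sqrt M = sqrt M) by (rewrite <- Hsq at 1; field; lra).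
    replace (M * (beta + (B + 1) / sqrt M)) with (M * beta + (B + 1) * (M / sqrt M))
      by (field; lra).
    rewrite E. exact Hp.
Qed.

End Improvement.

Lemma embeds_with_iterate A B k : 0 < A -> embeds_with A B ->
  exists L, embeds_with A L /\ L ^ 2 <= B ^ 2 - INR k * (A ^ 2 / 2).
Proof.
  intros HA HB. induction k as [|k [L [HL EL]]]; [exists B; split; [exact HB|simpl; lra]|].
  destruct HL as (f & Hin & Hf).
  destruct (embeds_with_smaller f A L HA Hin Hf) as [L' [HL' EL']].
  exists L'. split; [exact HL'|]. rewrite S_INR. lra.
Qed.

Lemma no_biLipschitz_embedding : ~ biLip_embeds_tree_in_Y.
Proof.
  intros (f & A & B & HA & HB & Hin & Hf).
  assert (HA2 : 0 < A ^ 2 / 2) by nra.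
  destruct (INR_unbounded (B ^ 2 / (A ^ 2 / 2))) as [k Hk].
  destruct (embeds_with_iterate A B k HA (ex_intro _ f (conj Hin Hf))) as [L [_ EL]].
  assert (B ^ 2 < INR k * (A ^ 2 / 2)).
  { apply Rmult_lt_compat_r with (r := A ^ 2 / 2) in Hk; [|exact HA2].
    unfold Rdiv at 1 in Hk. rewrite Rmult_assoc, Rinv_l in Hk by lra. lra. }
  pose proof (pow2_ge_0 L). lra.
Qed.

Theorem mainTheorem8 :
  (forall F : list vertex,
      (exists s t, In s F /\ In t F /\ s <> t) -> cY_is F 1) /\
  (exists lambda : R, 1 <= lambda /\
      forall (F : list vertex) (c : R),
        (exists s t, In s F /\ In t F /\ s <> t) -> cY_is F c -> c <= lambda) /\
  ~ biLip_embeds_tree_in_Y.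
Proof.
  split; [exact cY_is_1|]. split; [|exact no_biLipschitz_embedding].
  exists 1. split; [lra|]. intros F c Hne [Hc _].
  destruct (cY_is_1 F Hne) as [_ Hglb]. apply Hglb, Hc.
Qed.
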